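(* Let $\beta>1$ be a root of an irreducible monic polynomial $p\in\mathbb Z[x]$ of degree $d>1$, with Galois conjugates $\beta_2,\dots,\beta_d$. Let $E=[0,B)$ and let $F:E\to E$ be a generalized $\beta$-transformation, i.e. there are $0=x_0<x_1<\dots<x_l=B$ and $y_1,\dots,y_l$ with $\beta I_j-y_j\subseteq E$ and $F(x)=\beta x-y_j$ for $x\in I_j=[x_{j-1},x_j)$, and assume $x_0,\dots,x_l,y_1,\dots,y_l\in\mathbb{Q}(\beta)$. Then: (1) If $|\beta_j|<1$ for all $j=2,\dots,d$, then for every $x\in\mathbb{Q}(\beta)\cap E$ the orbit $\{F^n(x):n\ge0\}$ is finite, hence eventually periodic. (2) If $|\beta_j|>1$ for some $j\in\{2,\dots,d\}$, then there exists $x\in\mathbb{Q}(\beta)\cap E$ whose orbit under $F$ is infinite. *)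

From HB Require Import structures.
From mathcomp Require Import all_boot all_order all_algebra.
From mathcomp Require Import complex.
From mathcomp Require Import boolp classical_sets reals.
Set Implicit Arguments. Unset Strict Implicit. Unset Printing Implicit Defensive.
Import Order.TTheory GRing.Theory Num.Theory.
Local Open Scope ring_scope.

Definition inQbeta (R : realType) (beta x : R) : Prop :=
  exists q : {poly rat}, x = (map_poly (ratr : rat -> R) q).[beta].

Definition gen_beta_transf (R : realType) (beta B : R) (l : nat)
    (xs ys : nat -> R) (F : R -> R) : Prop :=
  [/\ (0 < l)%N, xs 0%N = 0, xs l = B,
      (forall j, (j < l)%N -> xs j < xs j.+1) &
      (forall j t, (1 <= j <= l)%N -> xs j.-1 <= t -> t < xs j ->
          0 <= beta * t - ys j /\ beta * t - ys j < B /\ F t = beta * t - ys j)].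

(* Writing orbit points as rational polynomials evaluated at beta, the
   same affine recursion a -> z a - y_j(z) runs at every conjugate z of beta; by
   irreducibility of p, polynomials taking equal values at beta take equal values
   at z.  Let Y = sum_j |y_j(z)|.  If every other conjugate lies in the open unit
   disc, the disc of radius |a_0(z)| + Y/(1-|z|) is invariant, so after clearing
   denominators the orbit consists of values at beta of integer polynomials
   bounded at all conjugates; reducing mod p and inverting the Vandermonde matrix
   of the roots bounds their coefficients, leaving finitely many values.  If some
   conjugate has |z| > 1, the values at z strictly increase once they exceed
   Y/(|z|-1), so the orbit never repeats; a starting point near B/2 with a large
   value at z is obtained by adding N ('X - q) to a representative of B/2, with
   q rational close to beta and N large. *)

From HB Require Import structures.
From mathcomp Require Import all_boot all_order all_algebra.
From mathcomp Require Import complex polyorder separable.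
From mathcomp Require Import boolp classical_sets cardinality reals.
From mathcomp Require Import ring lra.
Import Order.TTheory GRing.Theory Num.Theory.
Local Open Scope ring_scope.
Local Open Scope classical_set_scope.

Set Implicit Arguments. Unset Strict Implicit. Unset Printing Implicit Defensive.

Local Notation "p ^ f" := (map_poly f p) : ring_scope.

Lemma map_poly_ratr_intr (F : numFieldType) (c : {poly int}) :
  (c ^ intr) ^ ratr = c ^ (intr : int -> F).
Proof. by rewrite -map_poly_comp; apply: eq_map_poly => a /=; rewrite ratr_int. Qed.

Lemma root_irredp_dvdp (F : numFieldType) (pQ q : {poly rat}) (x : F) :
  irreducible_poly pQ -> root (pQ ^ ratr) x -> root (q ^ ratr) x -> pQ %| q.
Proof.
move=> irr px qx; rewrite -[_ %| _]negbK -irreducible_poly_coprime //.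
rewrite -(coprimep_map (ratr : {rmorphism rat -> F})).
by apply/negP => /coprimep_root/(_ px); rewrite -rootE qx.
Qed.

Lemma root_irredp_conj (F1 F2 : numFieldType) (pQ q : {poly rat}) (x : F1) (z : F2) :
  irreducible_poly pQ -> root (pQ ^ ratr) x -> root (pQ ^ ratr) z ->
  root (q ^ ratr) x -> root (q ^ ratr) z.
Proof.
move=> irr px pz /(root_irredp_dvdp irr px) pQq.
by rewrite -(divpK pQq) rmorphM rootM pz orbT.
Qed.

Lemma irredp_separable (F : realFieldType) (p : {poly F}) :
  irreducible_poly p -> separable_poly p.
Proof.
move=> irr; have p0 := irredp_neq0 irr.
have p'0 : p^`() != 0.
  by rewrite -size_poly_eq0 size_deriv -subn1 subn_eq0 -ltnNge; case: irr.
rewrite unlock irreducible_poly_coprime //.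
by apply/negP => /(dvdp_leq p'0); rewrite leqNgt lt_size_deriv.
Qed.

Lemma affine_contract_norm (C : numFieldType) (z a b A Y : C) :
  `|z| < 1 -> 0 <= A -> `|b| <= Y -> `|a| <= A + Y / (1 - `|z|) ->
  `|z * a - b| <= A + Y / (1 - `|z|).
Proof.
move=> z1 A0 bY aK; have z1' : 0 < 1 - `|z| by rewrite subr_gt0.
apply: le_trans (ler_normB _ _) _; rewrite normrM.
apply: le_trans (lerD (ler_wpM2l (normr_ge0 z) aK) bY) _.
rewrite -subr_ge0 (_ : _ - _ = (1 - `|z|) * A); first exact: mulr_ge0 (ltW z1') A0.
by field; rewrite gt_eqF.
Qed.

Lemma affine_expand_norm (C : numFieldType) (z a b Y : C) :
  1 < `|z| -> `|b| <= Y -> Y / (`|z| - 1) < `|a| -> `|a| < `|z * a - b|.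
Proof.
move=> z1 bY; rewrite -subr_gt0 in z1; rewrite ltr_pdivrMr // => Ya.
apply: lt_le_trans (lerB_normD _ _); rewrite normrM normrN.
apply: lt_le_trans (lerB (lexx _) bY); rewrite -subr_gt0.
by rewrite (_ : _ - _ = `|a| * (`|z| - 1) - Y) ?subr_gt0 //; ring.
Qed.

Lemma irredp_roots (C : numClosedFieldType) (p : {poly int}) :
  p \is monic -> irreducible_poly (p ^ intr : {poly rat}) ->
  exists rs : seq C,
    [/\ uniq rs, size rs = (size p).-1 & forall z, root (p ^ intr) z = (z \in rs)].
Proof.
move=> mon irr; have [rs Dp] := closed_field_poly_normal (p ^ (intr : int -> C)).
rewrite (monicP (monic_map (intr : {rmorphism int -> C}) mon)) scale1r in Dp.
exists rs; split.
- have := irredp_separable irr.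
  by rewrite -(separable_map (ratr : {rmorphism rat -> C})) map_poly_ratr_intr Dp
     separable_prod_XsubC.
- have := size_prod_XsubC rs id; rewrite -Dp size_map_inj_poly //.
    by move=> ->.
  exact: intr_inj.
- by move=> z; rewrite Dp root_prod_XsubC.
Qed.

Lemma coef_bounded_by_values (C : numFieldType) (rs : seq C) : uniq rs ->
  exists2 M : C, 0 <= M & forall (c : {poly C}) (W : C), 0 <= W ->
    (size c <= size rs)%N -> (forall r, r \in rs -> `|c.[r]| <= W) ->
    forall i, `|c`_i| <= M * W.
Proof.
move=> urs; set d := size rs.
set V : 'M[C]_d := Vandermonde d (\row_(j < d) rs`_j).
have Vu : V \in unitmx.
  rewrite unitmxE unitfE det_Vandermonde; apply/prodf_neq0 => i _.
  apply/prodf_neq0 => j ij; rewrite !mxE subr_eq0 nth_uniq //.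
  by apply/eqP => eij; move: ij; rewrite eij ltnn.
have M0 : 0 <= \sum_(i < d) \sum_(j < d) `|invmx V j i|.
  by apply: sumr_ge0 => i _; apply: sumr_ge0.
exists (\sum_(i < d) \sum_(j < d) `|invmx V j i|) => // c W W0 sc cW i.
have [id|di] := ltnP i d; last first.
  by rewrite nth_default ?(leq_trans sc) // normr0 mulr_ge0.
set v : 'rV[C]_d := \row_(k < d) c`_k.
have vV j : (v *m V) 0 j = c.[rs`_j].
  by rewrite mxE (horner_coef_wide _ sc); apply: eq_bigr => k _; rewrite !mxE.
have -> : c`_i = v 0 (Ordinal id) by rewrite mxE.
rewrite -(mulmxK Vu v) mxE; apply: le_trans (ler_norm_sum _ _ _) _.
apply: (@le_trans _ _ (\sum_(j < d) `|invmx V j (Ordinal id)| * W)).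
  by apply: ler_sum => j _; rewrite normrM vV mulrC ler_wpM2l ?cW ?mem_nth.
rewrite -mulr_suml ler_wpM2r // [leRHS](bigD1 (Ordinal id)) //= lerDl.
by apply: sumr_ge0 => k _; apply: sumr_ge0.
Qed.

Lemma finite_bounded_polys (n N : nat) :
  finite_set [set c : {poly int} | (size c <= n)%N /\ forall i, `|c`_i| <= N%:Z].
Proof.
pose mk (f : {ffun 'I_n -> 'I_(N.*2.+1)}) : {poly int} :=
  \poly_(i < n) (if insub i is Some j then (f j : nat)%:Z - N%:Z else 0).
apply: (sub_finite_set _ (finite_image mk (@finite_finset _ setT))) => c [sc cN].
exists [ffun i : 'I_n => inord (absz (c`_i + N%:Z))] => //; apply/polyP => i.
rewrite coef_poly; have [ilt|ige] := ltnP i n; last by rewrite nth_default ?(leq_trans sc).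
have := cN i; rewrite ler_norml => /andP[Nc cN'].
have ciN : 0 <= c`_i + N%:Z by rewrite -lerBlDr sub0r.
rewrite insubT ffunE /= inordK; first by rewrite gez0_abs // addrK.
by rewrite ltnS -(ler_nat int) natz gez0_abs // -addnn natrD natz lerD.
Qed.

Lemma horner_map_modp (S : comNzRingType) (p c : {poly int}) (x : S) :
  p \is monic -> root (p ^ intr) x -> ((c %% p) ^ intr).[x] = (c ^ intr).[x].
Proof.
move=> mon px; rewrite [in RHS](Pdiv.IdomainMonic.divp_eq mon c).
by rewrite rmorphD rmorphM /= !hornerE (eqP px) mulr0 add0r.
Qed.

Section ComplexConjugates.
Variable R : realType.

Lemma normr_real_complex (a : R) : `|a%:C%C| = `|a|%:C%C.
Proof. by rewrite normc_def /= expr0n /= addr0 sqrtr_sqr. Qed.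

Lemma ratr_real_complex (q : rat) : ratr q = (ratr q)%:C%C :> R[i].
Proof. by rewrite -(fmorph_rat (real_complex R : {rmorphism R -> R[i]})). Qed.

Lemma horner_intr_real_complex (c : {poly int}) (a : R) :
  (c ^ intr).[a%:C%C] = ((c ^ intr).[a])%:C%C.
Proof.
rewrite -(horner_map (real_complex R : {rmorphism R -> R[i]})) -map_poly_comp.
by congr _.[_]; apply: eq_map_poly => k /=; rewrite rmorph_int.
Qed.

Lemma complex_archi_bound (w : R[i]) : 0 <= w -> exists N : nat, w < N%:R.
Proof.
move=> w0; have /complex_realP[k wk] := ger0_real w0.
move: w0; rewrite wk ler0c => k0; exists (Num.bound k).
by rewrite -(rmorph_nat (real_complex R : {rmorphism R -> R[i]})) ltcR archi_boundP.
Qed.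

Lemma finite_conj_bounded (p : {poly int}) (beta : R) (W : R[i] -> R[i]) :
  p \is monic -> irreducible_poly (p ^ intr : {poly rat}) -> root (p ^ intr) beta ->
  finite_set [set (c ^ intr).[beta] | c in
    [set c : {poly int} | forall z, root (p ^ intr) z -> `|(c ^ intr).[z]| <= W z]].
Proof.
move=> mon irr pb; have [rs [urs srs prs]] := irredp_roots R[i] mon irr.
set W' := \sum_(r <- rs) `|W r|.
have [M M0 cM] := coef_bounded_by_values urs.
have W'0 : 0 <= W' by apply: sumr_ge0.
have [N MN] := complex_archi_bound (mulr_ge0 M0 W'0).
apply: (sub_finite_set _ (finite_image (fun c : {poly int} => (c ^ intr).[beta])
  (finite_bounded_polys (size rs) N))) => _ [c cW <-].
exists (c %% p); last by rewrite /= horner_map_modp.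
have scp : (size (c %% p)%R <= size rs)%N.
  by rewrite srs -ltnS prednK ?ltn_modpN0 ?monic_neq0 // size_poly_gt0 monic_neq0.
split=> // i; rewrite -(ler_int R[i]) intr_norm -coef_map.
apply: le_trans (ltW MN); apply: cM => //.
  by rewrite size_map_inj_poly //; apply: intr_inj.
move=> r rs_r; have cWr := cW r (etrans (prs r) rs_r).
have Wr0 : 0 <= W r := le_trans (normr_ge0 _) cWr.
rewrite horner_map_modp ?prs //; apply: le_trans cWr _.
rewrite -(ger0_norm Wr0) /W' (bigD1_seq r) //= lerDl.
exact: sumr_ge0.
Qed.

End ComplexConjugates.

Lemma infinite_range_inj (T : Type) (f : nat -> T) : injective f -> infinite_set (range f).
Proof.
by move=> finj; rewrite (eq_finite_set (inj_card_eq (in2W finj))); apply: infinite_nat.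
Qed.

Section InQbeta.
Variables (R : realType) (beta : R).

Lemma inQbeta_intr_scale t : inQbeta beta t ->
  exists2 a : int, a != 0 & exists c : {poly int}, a%:~R * t = (c ^ intr).[beta].
Proof.
case=> q ->; have [c [a a0 ->]] := rat_poly_scale q.
exists a => //; exists c; rewrite map_polyZ hornerZ map_poly_ratr_intr fmorphV.
by rewrite rmorph_int mulrA mulfV ?mul1r ?intr_eq0.
Qed.

Lemma inQbeta_common_denom (n : nat) (t : nat -> R) :
  (forall j, (j <= n)%N -> inQbeta beta (t j)) ->
  exists2 D : int, D != 0 & exists c : nat -> {poly int},
    forall j, (j <= n)%N -> D%:~R * t j = (c j ^ intr).[beta].
Proof.
elim: n => [|n IH] tQ.
  have [a a0 [c ac]] := inQbeta_intr_scale (tQ 0%N (leqnn 0)).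
  by exists a => //; exists (fun=> c) => -[].
have [D D0 [c Dc]] := IH (fun j jn => tQ j (leqW jn)).
have [a a0 [c' ac']] := inQbeta_intr_scale (tQ n.+1 (leqnn _)).
exists (D * a); first by rewrite mulf_neq0.
exists (fun j => if (j <= n)%N then a *: c j else D *: c') => j.
rewrite leq_eqVlt ltnS => /orP[/eqP ->|jn]; rewrite ?ltnn ?jn map_polyZ hornerZ.
  by rewrite -ac' intrM mulrA.
by rewrite -Dc // intrM mulrCA mulrA.
Qed.

Lemma inQbeta_approx_large_conj (t e : R) (z K : R[i]) :
  z != beta%:C%C -> inQbeta beta t -> 0 < e -> 0 <= K ->
  exists Q : {poly rat}, `|(Q ^ ratr).[beta] - t| < e /\ K < `|(Q ^ ratr).[z]|.
Proof.
move=> zb [P ->] e0 K0; set Pz := `|(P ^ ratr).[z]|.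
have /complex_realP[d dE] : `|z - beta%:C%C| \is Num.real by apply: normr_real.
have d0 : 0 < d by rewrite -ltcR -dE normr_gt0 subr_eq0.
have w0 : 0 <= (K + Pz) / (d / 2)%:C%C.
  by apply: divr_ge0; [apply: addr_ge0 K0 (normr_ge0 _) | rewrite ler0c divr_ge0 // ltW].
have [N KN] := complex_archi_bound w0.
have N0 : (0 < N)%N by rewrite -(ltr_nat R[i]) (le_lt_trans w0 KN).
set e' := Num.min (e / N%:R) (d / 2).
have [q qb] : exists q : rat, `|beta - ratr q| < e'.
  have e'0 : 0 < e' by rewrite lt_min !divr_gt0 ?ltr0n.
  have [|q] := @rat_in_itvoo R (beta - e') (beta + e').
    by rewrite ltrBlDr -addrA ltrDl addr_gt0.
  by rewrite in_itv /= => qb; exists q; rewrite distrC ltr_distl.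
exists (P + N%:R%:P * ('X - q%:P)).
rewrite !(rmorphD, rmorphM, rmorphN) /= !map_polyX !map_polyC !hornerE /= !rmorph_nat.
split.
  rewrite addrAC subrr add0r normrM normr_nat -ltr_pdivlMl ?ltr0n // mulrC.
  by apply: (lt_le_trans qb); rewrite ge_min lexx.
have qd : `|beta - ratr q| < d / 2 by apply: (lt_le_trans qb); rewrite ge_min lexx orbT.
have zq : (d / 2)%:C%C <= `|z - ratr q|.
  have -> : z - ratr q = (z - beta%:C%C) + (beta%:C%C - ratr q) by rewrite addrA subrK.
  apply: le_trans (lerB_normD _ _).
  rewrite dE ratr_real_complex -(raddfB (real_complex R) beta) normr_real_complex.
  rewrite -(raddfB (real_complex R)) lecR.
  by rewrite lerBrDr -lerBrDl {1}(splitr d) addrK ltW.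
rewrite addrC; apply: lt_le_trans (lerB_normD _ _).
rewrite normrM normr_nat; apply: lt_le_trans (lerB (ler_wpM2l (ler0n _ _) zq) (lexx Pz)).
have d2 : 0 < (d / 2)%:C%C by rewrite ltcE /= eqxx divr_gt0.
by rewrite ltrBrDr -ltr_pdivrMr.
Qed.

End InQbeta.

Section GenBetaTransformation.
Variables (R : realType) (beta B : R) (l : nat) (xs ys : nat -> R) (F : R -> R).
Hypothesis gbF : gen_beta_transf beta B l xs ys F.

Lemma gen_beta_transf_gt0 : 0 < B.
Proof.
case: gbF => l0 x0 _ xs_incr Fj.
have x01 : 0 < xs 1%N by rewrite -x0 xs_incr.
have x00 : xs 1%N.-1 <= 0 by rewrite x0.
have [Fx0 [FxB _]] := Fj 1%N 0 l0 x00 x01.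
exact: le_lt_trans Fx0 FxB.
Qed.

Lemma gen_beta_transf_step t : 0 <= t -> t < B ->
  exists2 j, (1 <= j <= l)%N & [/\ 0 <= F t, F t < B & F t = beta * t - ys j].
Proof.
case: gbF => _ x0 xl _ Fj t0 tB.
have tx : exists j, t < xs j by exists l; rewrite xl.
have [j tj minj] := ex_minnP tx.
have j0 : (0 < j)%N by case: j tj {minj} => //; rewrite x0 ltNge t0.
have jl : (j <= l)%N by apply: minj; rewrite xl.
have xt : xs j.-1 <= t by rewrite leNgt; apply/negP => /minj; rewrite leqNgt ltn_predL j0.
have [Ft0 [FtB FtE]] := Fj j t (introT andP (conj j0 jl)) xt tj.
by exists j; rewrite ?j0 ?jl ?FtE.
Qed.

Lemma gen_beta_transf_iter t n : 0 <= t -> t < B -> 0 <= iter n F t /\ iter n F t < B.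
Proof.
move=> t0 tB; elim: n => [//|n [Ft0 FtB]] /=.
by have [j _ []] := gen_beta_transf_step Ft0 FtB.
Qed.

Lemma gen_beta_orbit_lift (A : Type) (ev : A -> R) (step : nat -> A -> A) (P : A -> Prop) :
    (forall j a, (1 <= j <= l)%N -> ev (step j a) = beta * ev a - ys j) ->
    (forall j a, (1 <= j <= l)%N -> P a -> P (step j a)) ->
  forall a, P a -> 0 <= ev a -> ev a < B ->
  exists s : nat -> A, forall n, [/\ ev (s n) = iter n F (ev a), P (s n) &
    exists2 j, (1 <= j <= l)%N & s n.+1 = step j (s n)].
Proof.
move=> evE Pstep a Pa a0 aB.
have idx_ex t : exists j, 0 <= t -> t < B -> (1 <= j <= l)%N /\ F t = beta * t - ys j.
  have [[t0 tB]|ntB] := pselect (0 <= t /\ t < B); last by exists 0%N => t0 tB; case: ntB.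
  by have [j jl [_ _ Ft]] := gen_beta_transf_step t0 tB; exists j.
have [idx idxE] := choice idx_ex.
pose fix s n := if n is m.+1 then step (idx (iter m F (ev a))) (s m) else a.
have idx_itv n : (1 <= idx (iter n F (ev a)) <= l)%N.
  by have [t0 tB] := gen_beta_transf_iter n a0 aB; have [] := idxE _ t0 tB.
exists s; elim=> [|n [evs Ps _]].
  by split => //; exists (idx (ev a)) => //; apply: (idx_itv 0%N).
have [t0 tB] := gen_beta_transf_iter n a0 aB; have [_ Ft] := idxE _ t0 tB.
split; first by rewrite /= evE // evs -Ft.
- exact: Pstep.
- by exists (idx (iter n.+1 F (ev a))).
Qed.

Variable p : {poly int}.
Hypotheses (p_monic : p \is monic) (p_irr : irreducible_poly (p ^ intr : {poly rat}))
  (p_beta : root (p ^ intr) beta).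

Lemma gen_beta_orbit_finite :
    (forall j, (1 <= j <= l)%N -> inQbeta beta (ys j)) ->
    (forall z : R[i], root (p ^ intr) z -> z != beta%:C%C -> `|z| < 1) ->
  forall x, inQbeta beta x -> 0 <= x -> x < B -> finite_set (range (fun n => iter n F x)).
Proof.
move=> ysQ conj_lt1 x xQ x0 xB.
have [|D D0 [c Dc]] := @inQbeta_common_denom _ beta l (fun j => if j is 0 then x else ys j).
  by case=> [|j] jl; [exact: xQ | exact: ysQ].
set Y := fun z : R[i] => \sum_(j < l.+1) `|(c j ^ intr).[z]|.
set K := fun z : R[i] => `|(c 0%N ^ intr).[z]| + Y z / (1 - `|z|).
pose ev (a : {poly int}) := (a ^ intr).[beta] / D%:~R.
pose bounded (a : {poly int}) := forall z, root (p ^ intr) z -> z != beta%:C%C ->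
  `|(a ^ intr).[z]| <= K z.
have evc0 : ev (c 0%N) = x by rewrite /ev -(Dc 0%N) // mulrC mulKf ?intr_eq0.
have ev_step j a : (1 <= j <= l)%N -> ev ('X * a - c j) = beta * ev a - ys j.
  case: j => [//|j] jl; rewrite /ev rmorphB rmorphM /= map_polyX !hornerE -(Dc j.+1) //.
  by rewrite mulrBl [D%:~R * _]mulrC mulfK ?intr_eq0.
have bounded_step j a : (1 <= j <= l)%N -> bounded a -> bounded ('X * a - c j).
  move=> jl a_bd z pz zb; rewrite rmorphB rmorphM /= map_polyX !hornerE.
  apply: affine_contract_norm; rewrite ?conj_lt1 ?a_bd //.
  have jl1 : (j < l.+1)%N by case/andP: jl.
  by rewrite /Y (bigD1 (Ordinal jl1)) //= lerDl sumr_ge0.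
have bounded_c0 : bounded (c 0%N).
  move=> z pz zb; rewrite /K lerDl divr_ge0 ?sumr_ge0 //.
  by rewrite subr_ge0 ltW ?conj_lt1.
have := gen_beta_orbit_lift ev_step bounded_step bounded_c0; rewrite evc0.
case/(_ x0 xB) => s sE.
pose W z := if z == beta%:C%C then (`|D%:~R| * B)%:C%C else K z.
have fin := finite_conj_bounded W p_monic p_irr p_beta.
apply: (sub_finite_set _ (finite_image (fun t => t / D%:~R) fin)) => _ [n _ <-].
have [evs s_bd _] := sE n; exists (s n ^ intr).[beta]; last exact: evs.
exists (s n) => // z pz; rewrite /W; case: eqVneq => [->|zb]; last exact: s_bd.
have [t0 tB] := gen_beta_transf_iter n x0 xB.
have -> : (s n ^ intr).[beta%:C%C] = (iter n F x * D%:~R)%:C%C.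
  by rewrite horner_intr_real_complex -evs mulfVK ?intr_eq0.
rewrite normr_real_complex lecR normrM ger0_norm // mulrC.
by rewrite ler_wpM2l // ltW.
Qed.

Lemma infinite_range_conj_incr (z : R[i]) (u : nat -> R) (s : nat -> {poly rat}) :
    root (p ^ intr) z -> (forall n, (s n ^ ratr).[beta] = u n) ->
    (forall n, `|(s n ^ ratr).[z]| < `|(s n.+1 ^ ratr).[z]|) ->
  infinite_set (range u).
Proof.
move=> pz su s_incr; apply: infinite_range_inj => m n umn.
have : root ((s m - s n) ^ ratr) z.
  apply: (root_irredp_conj p_irr (x := beta)); rewrite ?map_poly_ratr_intr //.
  by rewrite rmorphB /root hornerD hornerN !su umn subrr.
rewrite rmorphB /root hornerD hornerN subr_eq0 => /eqP smn.
have /Order.NatMonotonyTheory.homo_ltn_lt s_lt := s_incr.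
by case: (ltngtP m n) => // /s_lt; rewrite smn ltxx.
Qed.

Lemma gen_beta_orbit_infinite (z : R[i]) :
    (forall j, (j <= l)%N -> inQbeta beta (xs j)) ->
    (forall j, (1 <= j <= l)%N -> inQbeta beta (ys j)) ->
    root (p ^ intr) z -> z != beta%:C%C -> 1 < `|z| ->
  exists x, [/\ inQbeta beta x, 0 <= x, x < B &
    infinite_set (range (fun n => iter n F x))].
Proof.
move=> xsQ ysQ pz zb z1.
have yq_ex j : exists q : {poly rat}, (1 <= j <= l)%N -> ys j = (q ^ ratr).[beta].
  by have [/ysQ[q ->]|_] := boolP (1 <= j <= l)%N; [exists q | exists 0].
have [yq yqE] := choice yq_ex.
set Y := \sum_(j < l.+1) `|(yq j ^ ratr).[z]|.
set K := Y / (`|z| - 1).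
have K0 : 0 <= K by rewrite divr_ge0 ?sumr_ge0 // subr_ge0 ltW.
pose step j (a : {poly rat}) := 'X * a - yq j.
have step_gt j a : (1 <= j <= l)%N -> K < `|(a ^ ratr).[z]| ->
    `|(a ^ ratr).[z]| < `|(step j a ^ ratr).[z]|.
  move=> jl; rewrite rmorphB rmorphM /= map_polyX !hornerE.
  apply: affine_expand_norm => //.
  have jl1 : (j < l.+1)%N by case/andP: jl.
  by rewrite /Y (bigD1 (Ordinal jl1)) //= lerDl sumr_ge0.
have B2Q : inQbeta beta (B / 2).
  have [q qB] := xsQ l (leqnn l); case: gbF => _ _ <- _ _.
  exists (q * 2^-1%:P).
  by rewrite rmorphM /= hornerM qB map_polyC /= fmorphV rmorph_nat hornerE.
have B0 := gen_beta_transf_gt0.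
have [a [aB Ka]] := inQbeta_approx_large_conj zb B2Q (divr_gt0 B0 (ltr0Sn _ 1)) K0.
have [a0 aB'] : 0 <= (a ^ ratr).[beta] /\ (a ^ ratr).[beta] < B.
  by move: aB; rewrite ltr_norml => /andP[? ?]; split; lra.
have ev_step j b : (1 <= j <= l)%N ->
    (step j b ^ ratr).[beta] = beta * (b ^ ratr).[beta] - ys j.
  by move=> jl; rewrite rmorphB rmorphM /= map_polyX !hornerE yqE.
pose large (b : {poly rat}) := K < `|(b ^ ratr).[z]|.
have large_step j b : (1 <= j <= l)%N -> large b -> large (step j b).
  by move=> jl Kb; apply: lt_trans Kb (step_gt j b jl Kb).
have [s sE] := gen_beta_orbit_lift ev_step large_step Ka a0 aB'.
exists (a ^ ratr).[beta]; split => //; first by exists a.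
apply: (infinite_range_conj_incr pz (s := s)) => n; first by have [] := sE n.
by have [_ Ksn [j jl ->]] := sE n; apply: step_gt.
Qed.

End GenBetaTransformation.

Unset Implicit Arguments.

Theorem theorem3p1 (R : realType) (p : {poly int}) (beta : R)
    (B : R) (l : nat) (xs ys : nat -> R) (F : R -> R) :
  p \is monic ->
  (1 < (size p).-1)%N ->
  irreducible_poly (map_poly (intr : int -> rat) p) ->
  root (map_poly (intr : int -> R) p) beta ->
  1 < beta ->
  gen_beta_transf beta B l xs ys F ->
  (forall j, (j <= l)%N -> inQbeta beta (xs j)) ->
  (forall j, (1 <= j <= l)%N -> inQbeta beta (ys j)) ->
  ((forall z : R[i], root (map_poly (intr : int -> R[i]) p) z -> z != (beta%:C)%C ->
       `|z| < 1) ->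
     forall x, inQbeta beta x -> 0 <= x -> x < B ->
       finite_set (range (fun n : nat => iter n F x)))
  /\
  ((exists z : R[i], [/\ root (map_poly (intr : int -> R[i]) p) z,
       z != (beta%:C)%C & 1 < `|z|]) ->
     exists x, [/\ inQbeta beta x, 0 <= x, x < B &
       infinite_set (range (fun n : nat => iter n F x))]).
Proof.
move=> p_monic _ p_irr p_beta _ gbF xsQ ysQ; split.
  exact: (gen_beta_orbit_finite gbF p_monic p_irr p_beta ysQ).
by case=> z [pz zb z1]; apply: (gen_beta_orbit_infinite gbF p_irr p_beta xsQ ysQ pz zb z1).
Qed.
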